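(* Let $U\subseteq\mathbb{R}$ satisfy $|\mathbb{R}\setminus U| = \mathfrak{c}$. Then there is a two-point selection $f$ on $\mathbb{R}$ such that the interior of $U$ in the topology $\tau_f$ is empty. In particular, if $U\neq\emptyset$, then $U\notin\tau_f$.
   Context: $\mathfrak{c}=|\mathbb{R}|$. A two-point selection on $\mathbb{R}$ is a function $f$ from the set of two-element subsets of $\mathbb{R}$ to $\mathbb{R}$ with $f(F)\in F$. Write $r<_f s$ if $f(\{r,s\})=r$ ($r\ne s$), $(\leftarrow,r)_f=\{x: x<_f r\}$, $(r,\rightarrow)_f=\{x: r<_f x\}$. The topology $\tau_f$ on $\mathbb{R}$ is the topology generated (as a subbase) by all sets $(\leftarrow,r)_f$, $(r,\rightarrow)_f$, $r\in\mathbb{R}$. *)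

From Stdlib Require Import Reals.
From mathcomp Require Import all_boot.
From mathcomp Require Import boolp classical_sets cardinality.
Export Reals.
Set Implicit Arguments. Unset Strict Implicit. Unset Printing Implicit Defensive.
Local Open Scope classical_set_scope.

(* A two-point selection on R: the value on the two-element set {x,y} (x <> y)
   is f x y = f y x, and it belongs to {x,y}. Values on the diagonal are irrelevant. *)
Definition two_point_selection (f : R -> R -> R) : Prop :=
  forall x y : R, x <> y -> f x y = f y x /\ (f x y = x \/ f x y = y).

Definition sel_lt (f : R -> R -> R) (r s : R) : Prop := r <> s /\ f r s = r.

Definition sel_left_ray (f : R -> R -> R) (r : R) : set R := [set x | sel_lt f x r].
Definition sel_right_ray (f : R -> R -> R) (r : R) : set R := [set x | sel_lt f r x].

Definition sel_subbasic (f : R -> R -> R) (A : set R) : Prop :=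
  exists r : R, A = sel_left_ray f r \/ A = sel_right_ray f r.

(* x is in the tau_f-interior of U: some finite intersection of subbasic sets
   (the empty intersection being R) contains x and is contained in U. *)
Definition tau_interior (f : R -> R -> R) (U : set R) : set R :=
  [set x | exists (n : nat) (A : nat -> set R),
      (forall i, (i < n)%N -> sel_subbasic f (A i) /\ A i x) /\
      (forall y, (forall i, (i < n)%N -> A i y) -> U y)].

Definition tau_open (f : R -> R -> R) (U : set R) : Prop :=
  forall x, U x -> tau_interior f U x.

From mathcomp Require Import all_boot boolp classical_sets cardinality.
From mathcomp Require Import functions Rstruct Rstruct_topology.
From Stdlib Require Import Lra.

Set Implicit Arguments.
Unset Strict Implicit.
Unset Printing Implicit Defensive.
Local Open Scope classical_set_scope.

(* Let h be a bijection from R \ U onto R. Order R by the key x |-> (x, 1) for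
   x in U and c |-> (h c, 0) for c outside U, lexicographically in R x {0,1},
   and let f pick the smaller point. Since h is onto, the points of R \ U fill
   the whole copy R x {0} of the line. A ray (<-, r)_f or (r, ->)_f containing
   x contains every point of R x {0} in a one-sided window next to the key of
   x: to the right of (a, 1), to the left of (a, 0). Finitely many such
   windows share a common one, so every basic neighbourhood of x meets R \ U
   and the tau_f-interior of U is empty. *)

Local Open Scope R_scope.

Definition lex_lt (p q : R * bool) : Prop :=
  p.1 < q.1 \/ (p.1 = q.1 /\ ~~ p.2 && q.2).

Lemma lex_lt_irrefl p : ~ lex_lt p p.
Proof. by case: p => a [] [|[]] //=; lra. Qed.

Lemma lex_lt_asym p q : lex_lt p q -> ~ lex_lt q p.
Proof.
case: p q => [a s] [b t]; rewrite /lex_lt /= => -[?|[? st]] [?|[? ts]]; try lra.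
by case: s t st ts => [] [].
Qed.

Lemma lex_lt_total p q : p <> q -> lex_lt p q \/ lex_lt q p.
Proof.
case: p q => [a s] [b t] neq_pq; rewrite /lex_lt /=.
have [lt_ab|[eq_ab|lt_ba]] := Rtotal_order a b; [by left; left|subst b|by right; left].
by case: s t neq_pq => [] [] // _; [right|left]; right.
Qed.

Definition window (p : R * bool) (e t : R) : Prop :=
  if p.2 then p.1 < t < p.1 + e else p.1 - e < t < p.1.

Lemma window_le p e e' t : e' <= e -> window p e' t -> window p e t.
Proof. by case: p => a [] /= ? [? ?]; split; lra. Qed.

Lemma window_nonempty p e : 0 < e -> exists t, window p e t.
Proof.
rewrite /window; case: p => a [] /= e_gt0; [exists (a + e / 2)|exists (a - e / 2)];
  split; lra.
Qed.

Lemma lex_lt_window_below p q :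
  lex_lt p q -> exists2 e, 0 < e & forall t, window p e t -> lex_lt (t, false) q.
Proof.
case: p q => [a s] [b t]; rewrite /lex_lt /window /=.
case: s => [[lt_ab|[_ //]]|le_ab].
- by exists (b - a) => [|x [? ?]]; [lra|left; lra].
- exists 1 => [|x [? ?]]; first lra.
  by left; case: le_ab => [|[? _]]; lra.
Qed.

Lemma lex_lt_window_above p q :
  lex_lt q p -> exists2 e, 0 < e & forall t, window p e t -> lex_lt q (t, false).
Proof.
case: p q => [a s] [b t]; rewrite /lex_lt /window /=.
case: s => [le_ba|[lt_ba|[_]]]; last by rewrite andbF.
- exists 1 => [|x [? ?]]; first lra.
  by left; case: le_ba => [|[? _]]; lra.
- by exists (a - b) => [|x [? ?]]; [lra|left; lra].
Qed.

Lemma common_pos_radius (P : nat -> R -> Prop) n :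
  (forall i e e', 0 < e' <= e -> P i e -> P i e') ->
  (forall i, (i < n)%N -> exists2 e, 0 < e & P i e) ->
  exists2 e, 0 < e & forall i, (i < n)%N -> P i e.
Proof.
move=> P_le; elim: n => [|n IHn] P_ex; first by exists 1 => //; lra.
have [e1 e1_gt0 P_e1] : exists2 e, 0 < e & forall i, (i < n)%N -> P i e.
  by apply: IHn => i lt_in; apply: P_ex; apply: ltnW.
have [e2 e2_gt0 P_e2] := P_ex n (ltnSn n).
have min_gt0 := Rmin_pos _ _ e1_gt0 e2_gt0.
exists (Rmin e1 e2) => // i; rewrite ltnS leq_eqVlt => /orP [/eqP ->|lt_in].
  by apply: P_le P_e2; split => //; apply: Rmin_r.
by apply: P_le (P_e1 _ lt_in); split => //; apply: Rmin_l.
Qed.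

Lemma not_tau_open_of_interior0 (f : R -> R -> R) (U : set R) :
  tau_interior f U = set0 -> U <> set0 -> ~ tau_open f U.
Proof.
move=> int0 U_neq0 U_open; apply: U_neq0; apply/seteqP; split => x //= Ux.
by have := U_open x Ux; rewrite int0.
Qed.

Section KeySelection.
Variables (U : set R) (h : R -> R).
Hypotheses (h_inj : set_inj (~` U) h) (h_surj : set_surj (~` U) setT h).

Definition key (x : R) : R * bool :=
  if pselect (U x) then (x, true) else (h x, false).

Definition key_sel (x y : R) : R :=
  if pselect (lex_lt (key x) (key y)) then x else y.

Lemma key_notin c : ~ U c -> key c = (h c, false).
Proof. by rewrite /key; case: pselect. Qed.

Lemma key_inj : injective key.
Proof.
move=> a b; rewrite /key.
case: (pselect (U a)) (pselect (U b)) => [Ua|Ua] [Ub|Ub] [] //.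
by apply: h_inj; rewrite inE.
Qed.

Lemma sel_lt_key_sel a b : sel_lt key_sel a b <-> lex_lt (key a) (key b).
Proof.
rewrite /sel_lt /key_sel; case: pselect => [lt_ab|nlt_ab]; split => //.
- by move=> _; split => // eq_ab; move: lt_ab; rewrite eq_ab; apply: lex_lt_irrefl.
- by move=> [neq_ab eq_ba]; case: neq_ab.
Qed.

Lemma two_point_selection_key_sel : two_point_selection key_sel.
Proof.
move=> x y neq_xy; rewrite /key_sel.
have neq_key : key x <> key y by move/key_inj.
case: (lex_lt_total neq_key) => [lt_xy|lt_yx].
- have nlt_yx := lex_lt_asym lt_xy.
  by do 2 case: pselect => //; split; [|left].
- have nlt_xy := lex_lt_asym lt_yx.
  by do 2 case: pselect => //; split; [|right].
Qed.

Lemma subbasic_key_sel_window x A :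
  sel_subbasic key_sel A -> A x ->
  exists2 e, 0 < e & forall c, ~ U c -> window (key x) e (h c) -> A c.
Proof.
move=> [r [->|->]] /sel_lt_key_sel Ax.
- have [e e_gt0 win_e] := lex_lt_window_below Ax.
  by exists e => // c Uc win_c; apply/sel_lt_key_sel; rewrite (key_notin Uc); apply: win_e.
- have [e e_gt0 win_e] := lex_lt_window_above Ax.
  by exists e => // c Uc win_c; apply/sel_lt_key_sel; rewrite (key_notin Uc); apply: win_e.
Qed.

Lemma tau_interior_key_sel : tau_interior key_sel U = set0.
Proof.
apply/seteqP; split => x //= [n [A [A_nbhd sub_AU]]].
have [e e_gt0 win_A] : exists2 e, 0 < e &
    forall i, (i < n)%N -> forall c, ~ U c -> window (key x) e (h c) -> A i c.
  apply: common_pos_radius => [i e e' [? ?] win_e c Uc win_c|i lt_in].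
    by apply: win_e => //; apply: window_le win_c.
  by have [Ai Aix] := A_nbhd i lt_in; apply: subbasic_key_sel_window.
have [t win_t] := window_nonempty (key x) e_gt0.
have [c Uc hc] := h_surj (I : setT t).
rewrite -hc in win_t; apply: (Uc); apply: sub_AU => i lt_in; exact: win_A.
Qed.

End KeySelection.

Theorem theorem3p12 (U : set R) :
  (~` U #= [set: R])%card ->
  exists f : R -> R -> R,
    two_point_selection f /\
    tau_interior f U = set0 /\
    (U <> set0 -> ~ tau_open f U).
Proof.
move=> /card_set_bijP [h [_ h_inj h_surj]].
have int0 := tau_interior_key_sel h_surj.
exists (key_sel U h); split; first exact: two_point_selection_key_sel.
by split => //; apply: not_tau_open_of_interior0.
Qed.
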